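(* Let $R$ be a ring, let $(X_*,d)$ be a chain complex of left $R$-modules with decompositions $X_n=\bigoplus_{i\in I_n}X_{n,i}$, let $Q$ be its weighted quiver, and let $\mathcal M$ be a partial matching of $Q$. Suppose that for each vertex $(n,i)$ of $Q^{\mathcal M}$, every zigzag path in $Q^{\mathcal M}$ starting at $(n,i)$ has finite length; that is, there is no infinite zigzag path. Then $\mathcal M$ is a Morse matching.
   Context: Write $d_{n,ji}:X_{n,i}\to X_{n-1,j}$ ($i\in I_n$, $j\in I_{n-1}$) for the components of $d_n$. The weighted quiver $Q$ has vertices the pairs $(n,i)$ with $n\in\mathbb Z$, $i\in I_n$. For each pair with $d_{n,ji}\neq0$ it has one arrow $(n,i)\to(n-1,j)$, of weight $d_{n,ji}$. A partial matching is a set $\mathcal M$ of arrows of $Q$ such that - every vertex is incident to at most one arrow of $\mathcal M$, and - the weight of each arrow of $\mathcal M$ is an isomorphism of modules. The quiver $Q^{\mathcal M}$ is obtained from $Q$ as follows: - each arrow not in $\mathcal M$ is kept, with its weight, and called thick; - each arrow $(n,i)\to(n-1,j)$ in $\mathcal M$ is replaced by a dotted arrow $(n-1,j)\to(n,i)$ of weight $-d_{n,ji}^{-1}$. A zigzag path is a path in $Q^{\mathcal M}$ whose arrows alternate between dotted and thick. For a finite path $p$, $\varphi^{\mathcal M}_p$ denotes the composition of the weights of its arrows, in the order of the path. Let $\mathcal V_n=\{(n,i):i\in I_n\}$ and let $\mathcal D_n\subseteq\mathcal V_n$ be the set of targets of arrows of $\mathcal M$ in $Q$. For $(n,i)\in\mathcal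 D_n$ and $(n,j)\in\mathcal V_n$, let $\mathrm{Path}_1^{\mathcal M}((n,i),(n,j))$ be the set of zigzag paths from $(n,i)$ to $(n,j)$ beginning with a dotted arrow. A Morse matching is a partial matching satisfying the following local finiteness hypothesis. For every $(n,i)\in\mathcal D_n$ and every $x\in X_{n,i}$: - for every $(n,j)\in\mathcal V_n$ the sum $\sum_{p\in\mathrm{Path}_1^{\mathcal M}((n,i),(n,j))}\varphi^{\mathcal M}_p(x)$ exists (for instance, it is a finite sum); - only finitely many $(n,j)\in\mathcal V_n$ have this sum nonzero. *)

From HB Require Import structures.
From mathcomp Require Import all_boot all_order all_algebra.
From Stdlib Require Import ClassicalEpsilon.
From Stdlib Require List.
Unset Implicit Arguments.
Import GRing.Theory.
Local Open Scope ring_scope.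

(* Conventions:
   - degrees are integers; I n is the index set of the decomposition of X_n;
   - the differential is indexed by its *target* degree:
       d n k j : X_{n+1,k} -> X_{n,j}   (the component d_{n+1,jk});
   - a matching M is a predicate on arrows (n,k,j) : (n+1,k) -> (n,j) of Q. *)

Section MorseDefs.
Variable R : pzRingType.
Variable I : int -> Type.
Variable X : forall n : int, I n -> lmodType R.
Variable d : forall (n : int) (k : I (n + 1)) (j : I n),
  {linear X (n + 1) k -> X n j}.

(* inverse of a map (the genuine inverse when the map is bijective) *)
Definition finv (A B : lmodType R) (f : A -> B) (y : B) : A :=
  epsilon (inhabits (0 : A)) (fun x => f x = y).

(* d_{n+1}(x) lies in the direct sum: finitely many nonzero components *)
Definition locally_finite_diff : Prop :=
  forall n (k : I (n + 1)) (x : X (n + 1) k),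
    exists s : seq (I n), forall j, d n k j x <> 0 -> List.In j s.

(* d_n o d_{n+1} = 0, componentwise *)
Definition chain_complex_cond : Prop :=
  forall n (k : I (n + 1 + 1)) (x : X (n + 1 + 1) k) (l : I n)
         (s : seq (I (n + 1))),
    List.NoDup s -> (forall j, d (n + 1) k j x <> 0 -> List.In j s) ->
    \sum_(j <- s) d n j l (d (n + 1) k j x) = 0.

Definition is_arrow n (k : I (n + 1)) (j : I n) : Prop :=
  exists x, d n k j x <> 0.

Variable M : forall n : int, I (n + 1) -> I n -> Prop.

Definition vtx := {n : int & I n}.

Definition partial_matching : Prop :=
  (forall n k j, M n k j -> is_arrow n k j /\ bijective (fun x => d n k j x)) /\
  (forall n k j n' k' j', M n k j -> M n' k' j' ->
     (existT I (n + 1) k = existT I (n' + 1) k' \/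
      existT I n j = existT I n' j' \/
      existT I (n + 1) k = existT I n' j' \/
      existT I n j = existT I (n' + 1) k') ->
     existT (fun m : int => (I (m + 1) * I m)%type) n (k, j) =
     existT (fun m : int => (I (m + 1) * I m)%type) n' (k', j')).

(* arrows of Q^M: qdot = true for dotted (reversed matched) arrows *)
Record qarrow := QArrow { qn : int; qk : I (qn + 1); qj : I qn; qdot : bool }.

Definition thick n (k : I (n + 1)) (j : I n) : Prop := is_arrow n k j /\ ~ M n k j.

Definition qvalid (a : qarrow) : Prop :=
  if qdot a then M (qn a) (qk a) (qj a) else thick (qn a) (qk a) (qj a).

Definition qsrc (a : qarrow) : vtx :=
  if qdot a then existT I (qn a) (qj a) else existT I (qn a + 1) (qk a).
Definition qtgt (a : qarrow) : vtx :=
  if qdot a then existT I (qn a + 1) (qk a) else existT I (qn a) (qj a).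

Definition infinite_zigzag (p : nat -> qarrow) : Prop :=
  (forall t, qvalid (p t)) /\
  (forall t, qtgt (p t) = qsrc (p t.+1)) /\
  (forall t, qdot (p t.+1) = ~~ qdot (p t)).

Definition no_infinite_zigzag : Prop :=
  forall (v : vtx) (p : nat -> qarrow), infinite_zigzag p -> qsrc (p 0) = v -> False.

(* Zigzag paths from (n,j0) to (n,j) beginning with a dotted arrow:
   (n,j0) ..> (n+1,k1) -> (n,j1) ..> ... ..> (n+1,km) -> (n,j),
   encoded by the list [(k1,j1);...;(k_{m-1},j_{m-1})] and the last km. *)
Fixpoint zz_valid (n : int) (j : I n) (j0 : I n) (p : seq (I (n + 1) * I n))
    (km : I (n + 1)) {struct p} : Prop :=
  match p with
  | [::] => M n km j0 /\ thick n km j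
  | (k, j') :: p' => M n k j0 /\ thick n k j' /\ zz_valid n j j' p' km
  end.

Fixpoint zz_val (n : int) (j : I n) (j0 : I n) (p : seq (I (n + 1) * I n))
    (km : I (n + 1)) {struct p} : X n j0 -> X n j :=
  match p with
  | [::] => fun x => d n km j (- finv (X (n + 1) km) (X n j0) (fun y => d n km j0 y) x)
  | (k, j') :: p' => fun x => zz_val n j j' p' km (d n k j' (- finv (X (n + 1) k) (X n j0) (fun y => d n k j0 y) x))
  end.

Definition zz_path (n : int) := (seq (I (n + 1) * I n) * I (n + 1))%type.

(* y is the (existing, finitely supported) sum over Path_1((n,i),(n,j)) of phi_p(x) *)
Definition zz_sum n (i j : I n) (x : X n i) (y : X n j) : Prop :=
  exists L : seq (zz_path n),
    List.NoDup L /\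
    (forall q, List.In q L -> zz_valid n j i q.1 q.2) /\
    (forall q, zz_valid n j i q.1 q.2 -> zz_val n j i q.1 q.2 x <> 0 -> List.In q L) /\
    y = \sum_(q <- L) zz_val n j i q.1 q.2 x.

Definition morse_matching : Prop :=
  partial_matching /\
  forall n (i : I n), (exists k : I (n + 1), M n k i) -> forall x : X n i,
    (forall j : I n, exists y, zz_sum n i j x y) /\
    exists S : seq (I n), forall (j : I n) (y : X n j), zz_sum n i j x y -> y <> 0 -> List.In j S.

End MorseDefs.

From Pilot Require Import Defs.
From HB Require Import structures.
From mathcomp Require Import all_boot all_order all_algebra.
From Stdlib Require Import ClassicalEpsilon Classical Eqdep_dec.
From Stdlib Require List.
Import GRing.Theory.

(* A dotted arrow followed by a thick arrow leads from a vertex (n, j0) to a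
   vertex (n, j') of the same degree, and the absence of infinite zigzag paths
   says that this step relation is well founded.  Since a vertex is matched at
   most once, every zigzag path from (n, j0) starts with the same dotted arrow
   to (n+1, k0); with w = -d_{n+1,j0k0}^{-1}(x), a path with a nonzero value on
   x either ends at a vertex in the finite support of d_{n+1}(w), or continues
   from such a vertex (n, j') as a path with a nonzero value on the
   j'-component of d_{n+1}(w).  Well-founded induction therefore shows that
   only finitely many paths have a nonzero value on x, so every sum is finite
   and only finitely many targets occur. *)

Local Open Scope ring_scope.

Definition finite_pred {T : Type} (P : T -> Prop) : Prop :=
  exists L : seq T, forall x, P x -> List.In x L.

Section FinitePred.
Context {T U : Type}.

Lemma finite_pred_sub {P Q : T -> Prop} :
  (forall x, P x -> Q x) -> finite_pred Q -> finite_pred P.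
Proof. by move=> PQ [L QL]; exists L => x /PQ /QL. Qed.

Lemma finite_pred_U {P Q : T -> Prop} :
  finite_pred P -> finite_pred Q -> finite_pred (fun x => P x \/ Q x).
Proof.
move=> [L PL] [L' QL']; exists (L ++ L') => x Px; apply/List.in_or_app.
by case: Px => [/PL|/QL']; [left | right].
Qed.

Lemma finite_pred_image (f : T -> U) {P : T -> Prop} :
  finite_pred P -> finite_pred (fun y => exists2 x, P x & y = f x).
Proof.
by move=> [L PL]; exists (map f L) => _ [x /PL Lx ->]; apply: List.in_map.
Qed.

Lemma finite_pred_bigU {A : T -> Prop} {B : T -> U -> Prop} :
  finite_pred A -> (forall a, A a -> finite_pred (B a)) ->
  finite_pred (fun b => exists2 a, A a & B a b).
Proof.
move=> [L AL] finB.
suff [L' L'P] : finite_pred (fun b => exists2 a, List.In a L /\ A a & B a b).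
  by exists L' => b [a Aa Bab]; apply: L'P; exists a => //; split; first exact: AL.
elim: L {AL} => [|a L [L' L'P]]; first by exists [::] => b [? [] []].
have [La BLa] : finite_pred (fun b => A a /\ B a b).
  case: (classic (A a)) => [/finB [La BLa]|nAa]; last by exists [::] => b [].
  by exists La => b [_ /BLa].
exists (La ++ L') => b [a' [[<-|La'] Aa'] Ba'b]; apply/List.in_or_app.
  by left; apply: BLa.
by right; apply: L'P; exists a'.
Qed.

Lemma finite_pred_enum {P : T -> Prop} :
  finite_pred P -> exists L, List.NoDup L /\ forall x, List.In x L <-> P x.
Proof.
move=> [L PL].
suff [L' [L'uniq L'P]] : exists L', List.NoDup L' /\
    forall x, List.In x L' <-> List.In x L /\ P x.
  by exists L'; split=> // x; rewrite L'P; split=> [[]|Px] //; split=> //; apply: PL.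
elim: L {PL} => [|a L [L' [L'uniq L'P]]].
  by exists [::]; split; [exact: List.NoDup_nil | move=> x; split=> [[]|[[]]]].
case: (classic (P a /\ ~ List.In a L')) => [[Pa aL']|keep].
  exists (a :: L'); split; first exact: List.NoDup_cons.
  move=> x /=; split.
    by case=> [<-|/L'P [Lx Px]]; split=> //; [left | right].
  by case=> -[<-|Lx] Px; [left | right; apply/L'P].
exists L'; split=> // x /=; split.
  by case/L'P => Lx Px; split=> //; right.
case=> -[<-|Lx] Px; last exact/L'P.
by apply: NNPP => aL'; apply: keep.
Qed.

End FinitePred.

Lemma big1_In (T : Type) (V : nmodType) (L : seq T) (F : T -> V) :
  (forall q, List.In q L -> F q = 0) -> \sum_(q <- L) F q = 0.
Proof.
elim: L => [|a L IHL] F0; first by rewrite big_nil.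
by rewrite big_cons F0 ?IHL ?add0r //; [move=> q Lq; apply: F0; right | left].
Qed.

Lemma finv_inj (R : pzRingType) (A B : lmodType R) (f : A -> B) :
  injective f -> cancel f (Defs.finv R A B f).
Proof.
move=> f_inj x; apply: f_inj; rewrite /Defs.finv.
by apply: (epsilon_spec _ (fun y => f y = f x)); exists x.
Qed.

Lemma no_descending_chain_well_founded (T : Type) (r : T -> T -> Prop) :
  (forall f : nat -> T, ~ (forall t, r (f t.+1) (f t))) -> well_founded r.
Proof.
move=> no_chain x; apply: NNPP => x_nacc.
have step (y : {y | ~ Acc r y}) : {z : {z | ~ Acc r z} | r (sval z) (sval y)}.
  apply: constructive_indefinite_description; case: y => y /= y_nacc.
  have [z rzy z_nacc] : exists2 z, r z y & ~ Acc r z.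
    apply: NNPP => none; apply: y_nacc; constructor => z rzy.
    by apply: NNPP => z_nacc; apply: none; exists z.
  by exists (exist _ z z_nacc).
pose f t := sval (iter t (fun y => sval (step y)) (exist _ x x_nacc)).
by apply: (no_chain f) => t; apply: (svalP (step _)).
Qed.

Section MorseMatching.
Variable R : pzRingType.
Variable I : int -> Type.
Variable X : forall n : int, I n -> lmodType R.
Variable d : forall (n : int) (k : I (n + 1)) (j : I n),
  {linear X (n + 1) k -> X n j}.
Variable M : forall n : int, I (n + 1) -> I n -> Prop.

Local Notation thick := (thick R I X d M).
Local Notation zz_valid := (zz_valid R I X d M).
Local Notation zz_val := (zz_val R I X d).
Local Notation zz_sum := (zz_sum R I X d M).
Local Notation finv n k j :=
  (Defs.finv R (X (n + 1) k) (X n j) (fun y => d n k j y)).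

Hypothesis d_fin : locally_finite_diff R I X d.
Hypothesis M_matching : partial_matching R I X d M.
Hypothesis no_zigzag : no_infinite_zigzag R I X d M.

Lemma matched_uniq {n k k' j} : M n k j -> M n k' j -> k = k'.
Proof.
move=> Mkj Mk'j.
have := proj2 M_matching n k j n k' j Mkj Mk'j (or_intror (or_introl erefl)).
pose arrow_type m := (I (m + 1) * I m)%type.
by move/(inj_pair2_eq_dec _ (@eq_comparable int) arrow_type) => -[].
Qed.

Lemma finv_matched0 n k j : M n k j -> finv n k j 0 = 0.
Proof.
move=> /(proj1 M_matching) [_ /bij_inj/finv_inj dK].
by rewrite -{1}(raddf0 (d n k j)) dK.
Qed.

Lemma zz_val0 n j j0 p km : zz_valid n j j0 p km -> zz_val n j j0 p km 0 = 0.
Proof.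
elim: p j0 => [|[k j'] p IHp] j0 /= => [[Mkj0 _]|[Mkj0 [_ valid_p]]];
  by rewrite finv_matched0 // oppr0 raddf0 ?IHp.
Qed.

Definition zz_step n (j' j0 : I n) : Prop := exists k, M n k j0 /\ thick n k j'.

Definition zigzag_of_chain n (f : nat -> I n) (k : nat -> I (n + 1)) (t : nat) :=
  if odd t then QArrow I n (k t./2) (f t./2.+1) false
  else QArrow I n (k t./2) (f t./2) true.

Lemma zigzag_of_chainP n f k :
  (forall t, M n (k t) (f t) /\ thick n (k t) (f t.+1)) ->
  infinite_zigzag R I X d M (zigzag_of_chain n f k).
Proof.
have half_succ t : t.+1./2 = (odd t + t./2)%N by rewrite -uphalfE uphalf_half.
rewrite /zigzag_of_chain => chain; split; [|split] => t.
- by case: (odd t) (chain t./2) => - [].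
- by rewrite oddS half_succ; case: (odd t).
- by rewrite oddS; case: (odd t).
Qed.

Lemma zz_step_wf n : well_founded (zz_step n).
Proof.
apply: no_descending_chain_well_founded => f /(choice _) [k chain].
exact: (no_zigzag _ _ (zigzag_of_chainP n f k chain)).
Qed.

Definition zz_nonzero n (j0 : I n) (x : X n j0) (jq : I n * zz_path I n) : Prop :=
  zz_valid n jq.1 j0 jq.2.1 jq.2.2 /\ zz_val n jq.1 j0 jq.2.1 jq.2.2 x <> 0.

Definition zz_nil n (k : I (n + 1)) (j : I n) : I n * zz_path I n := (j, ([::], k)).

Definition zz_cons n (k : I (n + 1)) (j' : I n) (jq : I n * zz_path I n) :=
  (jq.1, ((k, j') :: jq.2.1, jq.2.2)).

Lemma zz_nonzero_cases {n j0 k0} x : M n k0 j0 -> forall jq, zz_nonzero n j0 x jq ->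
  let w := - finv n k0 j0 x in
  (exists2 j, d n k0 j w <> 0 & jq = zz_nil n k0 j) \/
  (exists2 j', d n k0 j' w <> 0 /\ zz_step n j' j0 &
     exists2 jq', zz_nonzero n j' (d n k0 j' w) jq' & jq = zz_cons n k0 j' jq').
Proof.
move=> Mk0j0 jq; case: jq => j [[|[k j'] p] km] [/= valid nz].
  case: valid => Mkmj0 _; have ekm := matched_uniq Mkmj0 Mk0j0; subst km.
  by left; exists j.
case: valid => Mkj0 [thick_kj' valid_p]; have ek := matched_uniq Mkj0 Mk0j0; subst k.
right; exists j'; last by exists (j, (p, km)).
split; last by exists k0.
by move=> dw0; apply: nz; rewrite dw0 zz_val0.
Qed.

Lemma zz_nonzero_finite n j0 (x : X n j0) : finite_pred (zz_nonzero n j0 x).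
Proof.
elim: (zz_step_wf n j0) x => {}j0 _ IHj0 x.
case: (classic (exists k, M n k j0)) => [[k0 Mk0j0]|unmatched]; last first.
  exists [::] => -[j [[|[k j'] p] km]] [/= [Mj0 _] _];
    by case: unmatched; eexists; exact: Mj0.
have supp_fin : finite_pred (fun j => d n k0 j (- finv n k0 j0 x) <> 0).
  exact: d_fin.
apply: finite_pred_sub (zz_nonzero_cases x Mk0j0) _.
apply: finite_pred_U; first exact (finite_pred_image (zz_nil n k0) supp_fin).
apply: finite_pred_bigU => [|j' [_ step_j']].
  by apply: finite_pred_sub supp_fin => j' [].
exact (finite_pred_image (zz_cons n k0 j') (IHj0 j' step_j' _)).
Qed.

Lemma zz_sum_exists n i j (x : X n i) : exists y, zz_sum n i j x y.
Proof.
have fin : finite_pred (fun q : zz_path I n => zz_nonzero n i x (j, q)).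
  apply: finite_pred_sub (finite_pred_image snd (zz_nonzero_finite n i x)) => q nz_q.
  by exists (j, q).
have [L [L_uniq LP]] := finite_pred_enum fin.
exists (\sum_(q <- L) zz_val n j i q.1 q.2 x), L.
split=> //; split=> [q /LP [] //|]; split=> // q valid nz.
by apply/LP; split.
Qed.

Lemma zz_sum_support n i (x : X n i) :
  exists S : seq (I n), forall j y, zz_sum n i j x y -> y <> 0 -> List.In j S.
Proof.
have [L LP] := zz_nonzero_finite n i x.
exists (map fst L) => j y [Lj [_ [valid [_ ->]]]] sum_neq0.
have [q Lq nz] : exists2 q, List.In q Lj & zz_val n j i q.1 q.2 x <> 0.
  apply: NNPP => none; apply: sum_neq0; apply: big1_In => q Lq.
  by apply: NNPP => nz; apply: none; exists q.
exact: (List.in_map fst L (j, q) (LP (j, q) (conj (valid q Lq) nz))).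
Qed.

End MorseMatching.

Theorem proposition3p2 (R : pzRingType) (I : int -> Type)
  (X : forall n : int, I n -> lmodType R)
  (d : forall (n : int) (k : I (n + 1)%R) (j : I n),
         {linear X (n + 1)%R k -> X n j})
  (M : forall n : int, I (n + 1)%R -> I n -> Prop) :
  locally_finite_diff R I X d -> chain_complex_cond R I X d ->
  partial_matching R I X d M -> no_infinite_zigzag R I X d M ->
  morse_matching R I X d M.
Proof.
move=> d_fin _ M_matching no_zigzag; split=> // n i _ x; split.
  by move=> j; apply: zz_sum_exists.
by apply: zz_sum_support.
Qed.
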